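(* Let $U\in \mathbb{C}^{m\times p}$ and $V\in \mathbb{C}^{q\times m}$ be arbitrary matrices, and let $E=U(VU)^{\dagger}V$. Then $E$ is idempotent, and its range and null space are given by \[ R(E)=R(UU^{*}V^{*})=R(UU^{*}V^{*}V)=R(U)\cap \big((UU^{*})^{\dagger}(R(U)\cap N(V))\big)^{\perp}, \] \[ N(E)=N(U^{*}V^{*}V)=N(UU^{*}V^{*}V)=N(V)\oplus (V^{*}V)^{\dagger}\big(R(U)+N(V)\big)^{\perp}. \]
   Context: $A^{*}$ denotes the conjugate transpose of $A$; $A^{\dagger}$ denotes the Moore–Penrose inverse of $A$ (the unique $X$ with $AXA=A$, $XAX=X$, $(AX)^*=AX$, $(XA)^*=XA$). $R(A)$ and $N(A)$ are the range and null space of $A$. For a subspace $S\subseteq\mathbb{C}^m$, $S^{\perp}$ is its orthogonal complement with respect to the standard inner product, and for a matrix $B$, $BS=\{Bs:s\in S\}$. $\oplus$ denotes a direct sum of subspaces. *)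

(* Complex matrices over an arbitrary numeric algebraically
   closed field C (e.g. C = R[i], the complex numbers), with conjugation z^*. *)
From HB Require Import structures.
From mathcomp Require Import all_boot all_order all_algebra.
From Stdlib Require Import ClassicalEpsilon.
Set Implicit Arguments. Unset Strict Implicit. Unset Printing Implicit Defensive.
Import Order.TTheory GRing.Theory Num.Theory.
Local Open Scope ring_scope.

Section Defs.
Variable C : numClosedFieldType.

Definition ctrmx m n (A : 'M[C]_(m, n)) : 'M[C]_(n, m) := (map_mx Num.conj A)^T.

Definition is_MP m n (A : 'M[C]_(m, n)) (X : 'M[C]_(n, m)) : Prop :=
  [/\ A *m X *m A = A, X *m A *m X = X,
      ctrmx (A *m X) = A *m X & ctrmx (X *m A) = X *m A].

Definition mpinv m n (A : 'M[C]_(m, n)) : 'M[C]_(n, m) :=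
  epsilon (inhabits 0) (is_MP A).

Definition subsp m := 'cV[C]_m -> Prop.

Definition range m n (A : 'M[C]_(m, n)) : subsp m :=
  fun x => exists y : 'cV[C]_n, x = A *m y.
Definition nullsp m n (A : 'M[C]_(m, n)) : subsp n :=
  fun x => A *m x = 0.
Definition orthc m (S : subsp m) : subsp m :=
  fun x => forall y, S y -> ctrmx y *m x = 0.
Definition imsp m n (B : 'M[C]_(m, n)) (S : subsp n) : subsp m :=
  fun x => exists2 s, S s & x = B *m s.
Definition capsp m (S T : subsp m) : subsp m := fun x => S x /\ T x.
Definition addsp m (S T : subsp m) : subsp m :=
  fun x => exists s t, [/\ S s, T t & x = s + t].
Definition eqsp m (S T : subsp m) : Prop := forall x, S x <-> T x.
Definition is_dsum m (X S T : subsp m) : Prop :=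
  eqsp X (addsp S T) /\ (forall x, S x -> T x -> x = 0).
End Defs.

(* With W = V U and X = W^+, idempotency of E = U X V is just X W X = X.
   The range and null-space identities follow by rewriting with the
   Moore-Penrose equations in the forms X = W^* X^* X = X X^* W^* and
   W^* = W^* W X = X W W^*, using definiteness of the Gram form
   (A^* A x = 0 forces A x = 0) to cancel factors. The descriptions through
   orthogonal complements rest on one fact: A^+ A fixes every vector
   orthogonal to N(A), and dually A A^+ fixes N(A^* )^perp. For A = V U it
   shows that E fixes every vector of R(U) orthogonal to
   (U U^* )^+ (R(U) ∩ N(V)); for A = V^* V, whose null space is N(V), it
   shows that A A^+ fixes (R(U) + N(V))^perp, which puts the direct sum
   inside N(E). *)
From HB Require Import structures.
From mathcomp Require Import all_boot all_order all_algebra.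
From Stdlib Require Import ClassicalEpsilon.
Set Implicit Arguments. Unset Strict Implicit. Unset Printing Implicit Defensive.
Import GRing.Theory Num.Theory.
Local Open Scope ring_scope.

Section ConjugateTranspose.
Variable C : numClosedFieldType.
Implicit Types m n k : nat.

Lemma ctrmx_mul m n k (A : 'M[C]_(m, n)) (B : 'M[C]_(n, k)) :
  ctrmx (A *m B) = ctrmx B *m ctrmx A.
Proof. by rewrite /ctrmx map_mxM trmx_mul. Qed.

Lemma ctrmxK m n (A : 'M[C]_(m, n)) : ctrmx (ctrmx A) = A.
Proof. by apply/matrixP=> i j; rewrite /ctrmx !mxE conjCK. Qed.

Lemma ctrmxD m n (A B : 'M[C]_(m, n)) : ctrmx (A + B) = ctrmx A + ctrmx B.
Proof. by apply/matrixP=> i j; rewrite /ctrmx !mxE rmorphD. Qed.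

Lemma ctrmx0 m n : ctrmx (0 : 'M[C]_(m, n)) = 0.
Proof. by apply/matrixP=> i j; rewrite /ctrmx !mxE rmorph0. Qed.

Lemma ctrmx1 n : ctrmx (1%:M : 'M[C]_n) = 1%:M.
Proof. by apply/matrixP=> i j; rewrite /ctrmx !mxE conjC_nat eq_sym. Qed.

Lemma ctrmx_inv n (A : 'M[C]_n) : ctrmx (invmx A) = invmx (ctrmx A).
Proof. by rewrite /ctrmx map_invmx trmx_inv. Qed.

Lemma gram_eq0 m n (A : 'M[C]_(m, n)) : ctrmx A *m A = 0 -> A = 0.
Proof.
move=> AcA0; apply/matrixP=> i j; rewrite mxE.
have /eqP := congr1 (fun M : 'M[C]_n => M j j) AcA0; rewrite !mxE.
under eq_bigr => k _ do rewrite /ctrmx !mxE mulrC.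
rewrite psumr_eq0; last by move=> k _; exact: mul_conjC_ge0.
by move=> /allP /(_ i (mem_index_enum _)); rewrite mul_conjC_eq0 => /eqP.
Qed.

Lemma gram_mulmx_eq0 m n k (A : 'M[C]_(m, n)) (B : 'M[C]_(n, k)) :
  ctrmx A *m A *m B = 0 -> A *m B = 0.
Proof.
by move=> AcAB0; apply: gram_eq0; rewrite ctrmx_mul -mulmxA (mulmxA (ctrmx A)) AcAB0 mulmx0.
Qed.

Lemma ctrmx_gram_mulmx_eq0 m n k (A : 'M[C]_(m, n)) (B : 'M[C]_(m, k)) :
  A *m ctrmx A *m B = 0 -> ctrmx A *m B = 0.
Proof. by move=> h; apply: gram_mulmx_eq0; rewrite ctrmxK. Qed.

Lemma nullsp_range_ctrmx_eq0 m n (A : 'M[C]_(m, n)) (x : 'cV[C]_n) y :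
  A *m x = 0 -> x = ctrmx A *m y -> x = 0.
Proof.
move=> Ax0 xE; apply: gram_eq0.
by rewrite {2}xE mulmxA -ctrmx_mul Ax0 ctrmx0 mul0mx.
Qed.

Lemma orthc_range m n (A : 'M[C]_(m, n)) (z : 'cV[C]_m) :
  orthc (range A) z -> ctrmx A *m z = 0.
Proof.
move=> zA; apply: gram_eq0.
rewrite mulmxA -[_ *m ctrmx A]ctrmx_mul; apply: zA.
by exists (ctrmx A *m z).
Qed.

End ConjugateTranspose.

Section MoorePenrose.
Variable C : numClosedFieldType.
Implicit Types m n r : nat.

Lemma gram_unitmx m r (F : 'M[C]_(m, r)) : row_full F -> ctrmx F *m F \in unitmx.
Proof.
case/row_fullP=> B BF1; rewrite unitmxE unitfE; apply/det0P => -[v /negP nz vFcF0].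
apply: nz; apply/eqP.
have Fv0 : F *m ctrmx v = 0.
  by apply: gram_eq0; rewrite ctrmx_mul ctrmxK -mulmxA (mulmxA (ctrmx F)) mulmxA vFcF0 mul0mx.
by rewrite -[v]ctrmxK -[ctrmx v]mul1mx -BF1 -mulmxA Fv0 mulmx0 ctrmx0.
Qed.

Lemma is_MP_full_rank_factor m n r (F : 'M[C]_(m, r)) (G : 'M[C]_(r, n)) :
  row_full F -> row_free G ->
  is_MP (F *m G)
    (ctrmx G *m invmx (G *m ctrmx G) *m invmx (ctrmx F *m F) *m ctrmx F).
Proof.
move=> Ffull Gfree.
have Gcfull : row_full (ctrmx G).
  by case/row_freeP: Gfree => B GB1; apply/row_fullP; exists (ctrmx B);
     rewrite -ctrmx_mul GB1 ctrmx1.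
set N1 := invmx (ctrmx F *m F); set N2 := invmx (G *m ctrmx G).
have N1F : N1 *m (ctrmx F *m F) = 1%:M := mulVmx (gram_unitmx Ffull).
have GN2 : G *m ctrmx G *m N2 = 1%:M.
  by apply: mulmxV; have := gram_unitmx Gcfull; rewrite ctrmxK.
have N1c : ctrmx N1 = N1 by rewrite /N1 ctrmx_inv ctrmx_mul ctrmxK.
have N2c : ctrmx N2 = N2 by rewrite /N2 ctrmx_inv ctrmx_mul ctrmxK.
have AX : F *m G *m (ctrmx G *m N2 *m N1 *m ctrmx F) = F *m N1 *m ctrmx F.
  by rewrite !mulmxA -(mulmxA F G) -(mulmxA F (G *m ctrmx G)) GN2 mulmx1.
have XA : ctrmx G *m N2 *m N1 *m ctrmx F *m (F *m G) = ctrmx G *m N2 *m G.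
  by rewrite !mulmxA -(mulmxA (ctrmx G *m N2 *m N1)) -(mulmxA (ctrmx G *m N2)) N1F mulmx1.
split.
- by rewrite AX !mulmxA -(mulmxA (F *m N1)) -(mulmxA F) N1F mulmx1.
- by rewrite XA !mulmxA -(mulmxA (ctrmx G *m N2) G)
     -(mulmxA (ctrmx G *m N2) (G *m ctrmx G)) GN2 mulmx1.
- by rewrite AX !ctrmx_mul ctrmxK N1c mulmxA.
- by rewrite XA !ctrmx_mul ctrmxK N2c mulmxA.
Qed.

Lemma mpinvP m n (A : 'M[C]_(m, n)) : is_MP A (mpinv A).
Proof.
apply: (epsilon_spec (inhabits 0) (is_MP A)).
have := is_MP_full_rank_factor (col_base_full A) (row_base_free A).
by rewrite mulmx_base => AX; eexists; exact: AX.
Qed.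

Section Identities.
Variables (m n : nat) (A : 'M[C]_(m, n)) (X : 'M[C]_(n, m)).
Hypothesis AX : is_MP A X.

Lemma mpE_ctrl : X = ctrmx A *m ctrmx X *m X.
Proof. by case: AX => _ XAX _ XAc; rewrite -ctrmx_mul XAc XAX. Qed.

Lemma mpE_ctrr : X = X *m ctrmx X *m ctrmx A.
Proof. by case: AX => _ XAX AXc _; rewrite -mulmxA -ctrmx_mul AXc mulmxA XAX. Qed.

Lemma ctrmx_mpEr : ctrmx A = ctrmx A *m A *m X.
Proof. by case: AX => AXA _ AXc _; rewrite -{1}AXA ctrmx_mul AXc mulmxA. Qed.

Lemma ctrmx_mpEl : ctrmx A = X *m A *m ctrmx A.
Proof. by case: AX => AXA _ _ XAc; rewrite -{1}AXA -mulmxA ctrmx_mul XAc. Qed.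

Lemma is_MP_ctrmx : is_MP (ctrmx A) (ctrmx X).
Proof.
case: AX => AXA XAX AXc XAc; split.
- by rewrite -!ctrmx_mul mulmxA AXA.
- by rewrite -!ctrmx_mul mulmxA XAX.
- by rewrite -ctrmx_mul XAc.
- by rewrite -ctrmx_mul AXc.
Qed.

Lemma mp_fix_orthc_nullsp (z : 'cV[C]_n) :
  orthc (nullsp A) z -> X *m A *m z = z.
Proof.
case: AX => AXA _ _ XAc zA.
set w := z - X *m A *m z.
have Aw : A *m w = 0 by rewrite mulmxBr !mulmxA AXA subrr.
have wXA : ctrmx w *m (X *m A *m z) = 0.
  by rewrite mulmxA -XAc -ctrmx_mul -mulmxA Aw mulmx0 ctrmx0 mul0mx.
have /eqP : w = 0 by apply: gram_eq0; rewrite {2}/w mulmxBr zA // wXA subr0.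
by rewrite subr_eq0 => /eqP <-.
Qed.

End Identities.

Lemma mp_fix_orthc_nullsp_ctrmx m n (A : 'M[C]_(m, n)) X (z : 'cV[C]_m) :
  is_MP A X -> orthc (nullsp (ctrmx A)) z -> A *m X *m z = z.
Proof.
move=> AX /(mp_fix_orthc_nullsp (is_MP_ctrmx AX)).
by case: AX => _ _ AXc _; rewrite -ctrmx_mul AXc.
Qed.

Lemma mp_gram_mulmx m n (A : 'M[C]_(m, n)) Z :
  is_MP (A *m ctrmx A) Z -> A *m ctrmx A *m Z *m A = A.
Proof.
case=> PZP _ _ _.
have D0 : (A *m ctrmx A *m Z - 1%:M) *m A *m ctrmx A = 0.
  by rewrite -mulmxA mulmxBl mul1mx PZP subrr.
have : ctrmx ((A *m ctrmx A *m Z - 1%:M) *m A) = 0.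
  by apply: gram_eq0; rewrite ctrmxK [ctrmx (_ *m A)]ctrmx_mul mulmxA D0 mul0mx.
move/(congr1 (@ctrmx C _ _)); rewrite ctrmxK ctrmx0 mulmxBl mul1mx => /eqP.
by rewrite subr_eq0 => /eqP.
Qed.

End MoorePenrose.

Section Subspaces.
Variable C : numClosedFieldType.

Lemma eqsp_range_mulmx m n k (A : 'M[C]_(m, n)) (B : 'M[C]_(m, k)) S T :
  A = B *m S -> B = A *m T -> eqsp (range A) (range B).
Proof.
move=> AE BE x; split=> -[y ->]; first by exists (S *m y); rewrite AE mulmxA.
by exists (T *m y); rewrite BE mulmxA.
Qed.

Lemma range_mulmx_gram m n k (B : 'M[C]_(m, n)) (A : 'M[C]_(k, n)) :
  eqsp (range (B *m ctrmx A)) (range (B *m ctrmx A *m A)).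
Proof.
apply: (eqsp_range_mulmx (S := mpinv A) (T := A)) => //.
by rewrite -!mulmxA (mulmxA (ctrmx A)) -(ctrmx_mpEr (mpinvP A)).
Qed.

Lemma nullsp_gram_mulmx m n k (A : 'M[C]_(m, n)) (B : 'M[C]_(m, k)) :
  eqsp (nullsp (A *m ctrmx A *m B)) (nullsp (ctrmx A *m B)).
Proof.
move=> x; rewrite /nullsp -!mulmxA; split=> [|->]; last by rewrite mulmx0.
by rewrite mulmxA => /ctrmx_gram_mulmx_eq0.
Qed.

End Subspaces.

Section ObliqueProjector.
Variables (C : numClosedFieldType) (m p q : nat).
Variables (U : 'M[C]_(m, p)) (V : 'M[C]_(q, m)).

Local Notation X := (mpinv (V *m U)).
Local Notation E := (U *m X *m V).
Let XP : is_MP (V *m U) X := mpinvP (V *m U).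

Lemma proj_idem : E *m E = E.
Proof.
case: XP => _ XWX _ _.
by rewrite !mulmxA -(mulmxA (U *m X) V U) -(mulmxA U X) -(mulmxA U (X *m _)) XWX.
Qed.

Lemma range_proj : eqsp (range E) (range (U *m ctrmx U *m ctrmx V)).
Proof.
apply: (eqsp_range_mulmx (S := ctrmx X *m X *m V) (T := U *m ctrmx (V *m U))).
  by rewrite {1}(mpE_ctrl XP) ctrmx_mul !mulmxA.
by rewrite -mulmxA -ctrmx_mul {1}(ctrmx_mpEl XP) !mulmxA.
Qed.

Lemma range_proj_gram : eqsp (range E) (range (U *m ctrmx U *m ctrmx V *m V)).
Proof. by move=> x; rewrite range_proj; apply: range_mulmx_gram. Qed.

Lemma nullsp_proj : eqsp (nullsp E) (nullsp (ctrmx U *m ctrmx V *m V)).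
Proof.
move=> x; rewrite /nullsp; split=> [Ex0 | UcVcVx0].
  have XVx0 : X *m V *m x = 0.
    have XVxE : X *m V *m x = ctrmx U *m (ctrmx V *m ctrmx X *m X *m V *m x).
      by rewrite {1}(mpE_ctrl XP) ctrmx_mul !mulmxA.
    rewrite XVxE; apply: ctrmx_gram_mulmx_eq0.
    by rewrite -mulmxA -XVxE !mulmxA.
  by rewrite -ctrmx_mul (ctrmx_mpEr XP) -!mulmxA (mulmxA X) XVx0 !mulmx0.
rewrite (mpE_ctrr XP) ctrmx_mul -!mulmxA.
by rewrite [ctrmx U *m _]mulmxA [ctrmx U *m _ *m _]mulmxA UcVcVx0 !mulmx0.
Qed.

Lemma nullsp_proj_gram : eqsp (nullsp E) (nullsp (U *m ctrmx U *m ctrmx V *m V)).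
Proof.
move=> x; rewrite nullsp_proj -!mulmxA (mulmxA U).
by symmetry; apply: nullsp_gram_mulmx.
Qed.

Local Notation Z := (mpinv (U *m ctrmx U)).

Lemma range_proj_sub_orthc x : range E x ->
  capsp (range U) (orthc (imsp Z (capsp (range U) (nullsp V)))) x.
Proof.
move=> /range_proj [y ->]; split.
  by exists (ctrmx U *m ctrmx V *m y); rewrite !mulmxA.
move=> _ [_ [[w ->] VUw0] ->].
have UcZcUUc := congr1 (@ctrmx C _ _) (mp_gram_mulmx (mpinvP (U *m ctrmx U))).
rewrite !ctrmx_mul ctrmxK in UcZcUUc.
rewrite !ctrmx_mul -!mulmxA (mulmxA U) (mulmxA (ctrmx Z)) (mulmxA (ctrmx U)) UcZcUUc.
by rewrite mulmxA -ctrmx_mul mulmxA -ctrmx_mul VUw0 ctrmx0 mul0mx.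
Qed.

Lemma orthc_sub_range_proj x :
  capsp (range U) (orthc (imsp Z (capsp (range U) (nullsp V)))) x -> range E x.
Proof.
move=> [[a ->] aZ].
set c := ctrmx U *m ctrmx Z *m (U *m a).
have Uc : U *m c = U *m a.
  have ZcP : is_MP (U *m ctrmx U) (ctrmx Z).
    by have := is_MP_ctrmx (mpinvP (U *m ctrmx U)); rewrite ctrmx_mul ctrmxK.
  by rewrite /c !mulmxA (mp_gram_mulmx ZcP).
have XWc : X *m (V *m U) *m c = c.
  apply: (mp_fix_orthc_nullsp XP) => w VUw0.
  rewrite /c !mulmxA -!ctrmx_mul -mulmxA; apply: aZ.
  exists (U *m w) => //; split; first by exists w.
  by rewrite /nullsp mulmxA.
by exists (U *m c); rewrite -Uc -{1}XWc !mulmxA.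
Qed.

Lemma range_proj_orthc :
  eqsp (range E) (capsp (range U) (orthc (imsp Z (capsp (range U) (nullsp V))))).
Proof. by move=> x; split; [apply: range_proj_sub_orthc | apply: orthc_sub_range_proj]. Qed.

Local Notation Q := (ctrmx V *m V).
Local Notation Y := (mpinv Q).
Local Notation orthc_UV := (orthc (addsp (range U) (nullsp V))).

Lemma nullsp_projE x : nullsp E x <-> ctrmx U *m (Q *m x) = 0.
Proof. by rewrite nullsp_proj /nullsp !mulmxA. Qed.

Lemma orthc_addsp_range_nullsp z :
  orthc_UV z -> ctrmx U *m z = 0 /\ Q *m Y *m z = z.
Proof.
move=> zUV; split.
  apply: orthc_range => s Us; apply: zUV.
  by exists s, 0; split; rewrite /nullsp ?mulmx0 ?addr0.
apply: (mp_fix_orthc_nullsp_ctrmx (mpinvP Q)) => w.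
rewrite /nullsp ctrmx_mul ctrmxK => /gram_mulmx_eq0 Vw0.
apply: zUV; exists 0, w; split; rewrite ?add0r //.
by exists 0; rewrite mulmx0.
Qed.

Lemma nullsp_proj_addsp : eqsp (nullsp E) (addsp (nullsp V) (imsp Y orthc_UV)).
Proof.
move=> x; rewrite nullsp_projE; split=> [UcQx0 | [t [_ [Vt0 [z zUV ->] ->]]]].
  exists (x - Y *m (Q *m x)), (Y *m (Q *m x)); split; last by rewrite subrK.
    apply: gram_mulmx_eq0; case: (mpinvP Q) => QYQ _ _ _.
    by rewrite mulmxBr (mulmxA Q Y) (mulmxA (Q *m Y)) QYQ subrr.
  exists (Q *m x) => //; move=> _ [_ [t [[w ->] Vt0 ->]]].
  rewrite ctrmxD mulmxDl ctrmx_mul -mulmxA UcQx0 mulmx0 add0r.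
  by rewrite -mulmxA mulmxA -ctrmx_mul Vt0 ctrmx0 mul0mx.
have [Ucz0 QYz] := orthc_addsp_range_nullsp zUV.
have Qt0 : Q *m t = 0 by rewrite -mulmxA Vt0 mulmx0.
by rewrite mulmxDr Qt0 add0r (mulmxA Q) QYz.
Qed.

(* [R((V^* V)^+)] is contained in [R(V^* )], which meets [N(V)] trivially. *)
Lemma nullsp_cap_imsp_mpinv x : nullsp V x -> imsp Y orthc_UV x -> x = 0.
Proof.
move=> Vx0 [z _ xE]; apply: (nullsp_range_ctrmx_eq0 (y := V *m (ctrmx Y *m (Y *m z))) Vx0).
by rewrite xE {1}(mpE_ctrl (mpinvP Q)) ctrmx_mul ctrmxK -!mulmxA.
Qed.

Lemma nullsp_proj_dsum : is_dsum (nullsp E) (nullsp V) (imsp Y orthc_UV).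
Proof. by split; [apply: nullsp_proj_addsp | apply: nullsp_cap_imsp_mpinv]. Qed.

End ObliqueProjector.

Theorem theorem2 (C : numClosedFieldType) (m p q : nat)
    (U : 'M[C]_(m, p)) (V : 'M[C]_(q, m)) :
  let E := U *m mpinv (V *m U) *m V in
  E *m E = E /\
      eqsp (range E) (range (U *m ctrmx U *m ctrmx V)) /\
      eqsp (range E) (range (U *m ctrmx U *m ctrmx V *m V)) /\
      eqsp (range E)
        (capsp (range U)
           (orthc (imsp (mpinv (U *m ctrmx U)) (capsp (range U) (nullsp V))))) /\
      eqsp (nullsp E) (nullsp (ctrmx U *m ctrmx V *m V)) /\
      eqsp (nullsp E) (nullsp (U *m ctrmx U *m ctrmx V *m V)) /\
    is_dsum (nullsp E) (nullsp V)
        (imsp (mpinv (ctrmx V *m V)) (orthc (addsp (range U) (nullsp V)))).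
Proof.
split; first exact: proj_idem.
split; first exact: range_proj.
split; first exact: range_proj_gram.
split; first exact: range_proj_orthc.
split; first exact: nullsp_proj.
split; first exact: nullsp_proj_gram.
exact: nullsp_proj_dsum.
Qed.
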